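(* Let $X=\mathbb{CP}^2\#n\overline{\mathbb{CP}}^2$ with $K_0=-3H+E_1+\cdots+E_n$, let $k$ be a positive integer and $U_5=\{A\in H_2(X;\mathbb{Z}):\mathrm{ind}(A)\ge 2k,\ A\cdot H>0\}$. (1) Every $\phi\in D_{K_0}$ satisfies $\phi(U_5)=U_5$. (2) If $n\le 8$, then for every $A\in U_5$ the orbit $\{\phi(A):\phi\in D_{K_0}\}$ is a finite subset of $U_5$.
   Context: $\{H,E_1,\dots,E_n\}$ is the standard basis of $H_2(X;\mathbb{Z})$, $\mathrm{ind}(A):=A^2-K_0\cdot A$. $D_{K_0}$ is the group of automorphisms of $H_2(X)$ induced by diffeomorphisms of $X$ preserving the canonical class $K_0$; it is generated by the reflections along the classes $E_i-E_j$ and $H-E_1-E_2-E_3$ (reflection along $v$ with $v^2=-2$ being $x\mapsto x+(x\cdot v)v$). *)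

From mathcomp Require Import all_boot all_order all_algebra.
Set Implicit Arguments. Unset Strict Implicit. Unset Printing Implicit Defensive.
Import Order.TTheory GRing.Theory Num.Theory.
Local Open Scope ring_scope.

(* H_2(X;Z) for X = CP^2 # n \bar{CP^2}: integer row vectors of length n+1,
   coordinate ord0 = coefficient of H, coordinate (lift ord0 i) = coefficient of E_(i+1). *)
Definition hcls (n : nat) := 'rV[int]_(n.+1).

Definition clsH (n : nat) : hcls n := \row_(j < n.+1) ((j == ord0)%:R : int).
Definition clsE (n : nat) (i : 'I_n) : hcls n :=
  \row_(j < n.+1) ((j == lift ord0 i)%:R : int).

Definition idot (n : nat) (A B : hcls n) : int :=
  A 0 ord0 * B 0 ord0 - \sum_(i < n) A 0 (lift ord0 i) * B 0 (lift ord0 i).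

Definition K0 (n : nat) : hcls n := - (3 *: clsH n) + \sum_(i < n) clsE i.

Definition ind (n : nat) (A : hcls n) : int := idot A A - idot (K0 n) A.

(* reflection along v (v^2 = -2): x |-> x + (x.v) v *)
Definition refl (n : nat) (v : hcls n) (x : hcls n) : hcls n := x + idot x v *: v.

Definition gen_class (n : nat) (v : hcls n) : Prop :=
  (exists i j : 'I_n, i != j /\ v = clsE i - clsE j) \/
  (exists i1 i2 i3 : 'I_n, val i1 = 0%N /\ val i2 = 1%N /\ val i3 = 2%N /\
      v = clsH n - clsE i1 - clsE i2 - clsE i3).

(* D_{K_0}: the group generated by these reflections (each is an involution,
   so the group is the set of finite compositions of generators) *)
Inductive DK (n : nat) : (hcls n -> hcls n) -> Prop :=
  | DK_id : DK (fun x => x)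
  | DK_step (v : hcls n) (f : hcls n -> hcls n) :
      gen_class v -> DK f -> DK (fun x => refl v (f x)).

Definition U5 (n k : nat) (A : hcls n) : Prop :=
  ((2 * k)%N%:Z <= ind A) /\ (0 < idot A (clsH n)).

From mathcomp Require Import all_boot all_order all_algebra zify ring lra.
Import Order.TTheory GRing.Theory Num.Theory.
Set Implicit Arguments. Unset Strict Implicit. Unset Printing Implicit Defensive.
Local Open Scope ring_scope.

(* Write x = a H + sum_i c_i E_i.  The intersection form is
   x.y = a a' - sum_i c_i c'_i, and K_0.x = -3a - sum_i c_i, so that
   ind(x) = a^2 + 3a + sum_i (c_i - c_i^2).

   (1) Each generator v of D_{K_0} (E_i - E_j or H - E_1 - E_2 - E_3) is a
   (-2)-class orthogonal to K_0, so its reflection is an involutive isometry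
   fixing K_0; hence every phi in D_{K_0} preserves x.y, K_0.x and ind.  The
   reflections along E_i - E_j do not change a; the one along H - E_1 - E_2 - E_3
   sends a to 2a + c_1 + c_2 + c_3, which an elementary inequality shows to be
   positive once a > 0 and ind >= 2.  So each generator, hence each phi,
   maps U_5 into U_5, and onto it because the generators are involutions.

   (2) The orbit of A lies in the level set {x.x = A.A, K_0.x = K_0.A}.  For
   n <= 8, expanding sum_i (3 c_i + a)^2 >= 0 on this level set bounds a, and
   then x.x = A.A bounds every c_i; a box of integer vectors is finite. *)

Notation hcoef x := (x 0 ord0).
Notation ecoef x i := (x 0 (lift ord0 i)).

Section IntersectionForm.
Variable n : nat.
Implicit Types x y z v : hcls n.

Lemma idotC x y : idot x y = idot y x.
Proof. by rewrite /idot mulrC; under eq_bigr do rewrite mulrC. Qed.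

Lemma idotDl x y z : idot (x + y) z = idot x z + idot y z.
Proof.
rewrite /idot !mxE; under eq_bigr do rewrite !mxE mulrDl.
rewrite big_split /=; ring.
Qed.

Lemma idotZl t x z : idot (t *: x) z = t * idot x z.
Proof.
rewrite /idot !mxE; under eq_bigr do rewrite !mxE -mulrA.
rewrite -mulr_sumr; ring.
Qed.

Lemma idotNl x z : idot (- x) z = - idot x z.
Proof. by rewrite -scaleN1r idotZl mulN1r. Qed.

Lemma idotDr x y z : idot z (x + y) = idot z x + idot z y.
Proof. by rewrite idotC idotDl !(idotC z). Qed.

Lemma idotZr t x z : idot z (t *: x) = t * idot z x.
Proof. by rewrite idotC idotZl idotC. Qed.

Lemma idotNr x z : idot z (- x) = - idot z x.
Proof. by rewrite idotC idotNl idotC. Qed.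

Definition idot_lin := (idotDl, idotDr, idotNl, idotNr, idotZl, idotZr).

Lemma idot_sumr (I : Type) (r : seq I) (P : pred I) (F : I -> hcls n) x :
  idot x (\sum_(i <- r | P i) F i) = \sum_(i <- r | P i) idot x (F i).
Proof.
elim/big_rec2: _ => [|i s y _ <-]; last by rewrite idotDr.
by rewrite -(scale0r (0 : hcls n)) idotZr mul0r.
Qed.

Lemma lift0_neq0 (i : 'I_n) : (lift ord0 i == ord0 :> 'I_n.+1) = false.
Proof. by rewrite eq_sym (negbTE (neq_lift _ _)). Qed.

Lemma idotH x : idot x (clsH n) = hcoef x.
Proof.
rewrite /idot !mxE eqxx mulr1 big1 ?subr0 // => i _.
by rewrite !mxE lift0_neq0 mulr0.
Qed.

Lemma idotE x (i : 'I_n) : idot x (clsE i) = - ecoef x i.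
Proof.
rewrite /idot !mxE eq_sym lift0_neq0 mulr0 sub0r (bigD1 i) //= !mxE eqxx mulr1.
by rewrite big1 ?addr0 // => j /negbTE ji; rewrite !mxE (inj_eq lift_inj) ji mulr0.
Qed.

Lemma idotHH : idot (clsH n) (clsH n) = 1.
Proof. by rewrite idotH mxE eqxx. Qed.

Lemma idotEH (i : 'I_n) : idot (clsE i) (clsH n) = 0.
Proof. by rewrite idotH mxE eq_sym lift0_neq0. Qed.

Lemma idotHE (i : 'I_n) : idot (clsH n) (clsE i) = 0.
Proof. by rewrite idotC idotEH. Qed.

Lemma idotEE (i j : 'I_n) : idot (clsE i) (clsE j) = - (j == i)%:R.
Proof. by rewrite idotE mxE (inj_eq lift_inj). Qed.

Definition idot_basis := (idotHH, idotEH, idotHE, idotEE).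

Lemma idotK0 x : idot (K0 n) x = -3 * hcoef x - \sum_(i < n) ecoef x i.
Proof.
rewrite idotC /K0 idotDr idotNr idotZr idotH idot_sumr.
under eq_bigr do rewrite idotE.
by rewrite sumrN; ring.
Qed.

Lemma idotK0H : idot (K0 n) (clsH n) = -3.
Proof. by rewrite idotK0 mxE eqxx big1 ?subr0 // => i _; rewrite mxE lift0_neq0. Qed.

Lemma idotK0E (i : 'I_n) : idot (K0 n) (clsE i) = -1.
Proof.
rewrite idotK0 mxE eq_sym lift0_neq0 mulr0 sub0r (bigD1 i) //= mxE eqxx big1 ?addr0 //.
by move=> j /negbTE ji; rewrite mxE (inj_eq lift_inj) ji.
Qed.

(* The index in coordinates; each summand c_i - c_i^2 is <= 0 on integers. *)
Lemma ind_coord x : ind x =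
  hcoef x * hcoef x + 3 * hcoef x + \sum_(i < n) (ecoef x i - ecoef x i * ecoef x i).
Proof. by rewrite /ind idotK0 {1}/idot sumrB; ring. Qed.

End IntersectionForm.

Lemma int_sub_sq_le0 (c : int) : c - c * c <= 0.
Proof. nia. Qed.

(* The arithmetic heart of part (1): if a > 0 and the part of ind coming from
   H, E_1, E_2, E_3 is at least 2, then the H-coefficient 2a + c_1 + c_2 + c_3
   of the Cremona reflection stays positive.  If not, s = c_1 + c_2 + c_3 <= -2a,
   and 3 sum c_i^2 >= s^2 gives a^2 + 3a + s - s^2/3 <= a - a^2/3 < 2. *)
Lemma cremona_ineq (a c1 c2 c3 : int) : 0 < a ->
  2 <= a * a + 3 * a + (c1 - c1 * c1) + (c2 - c2 * c2) + (c3 - c3 * c3) ->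
  0 < 2 * a + c1 + c2 + c3.
Proof.
move=> a_gt0 hind; rewrite ltNge; apply/negP => hneg.
have s12 := sqr_ge0 (c1 - c2); have s13 := sqr_ge0 (c1 - c3); have s23 := sqr_ge0 (c2 - c3).
have hprod : 0 <= (- (c1 + c2 + c3) - 2 * a) * (- (c1 + c2 + c3) + 2 * a + 3).
  by apply: mulr_ge0; lia.
nia.
Qed.

Section Reflections.
Variable n : nat.
Implicit Types x y v : hcls n.

Definition K0_root v : Prop := idot v v = -2 /\ idot (K0 n) v = 0.

Lemma refl_isometry v x y : idot v v = -2 -> idot (refl v x) (refl v y) = idot x y.
Proof. by move=> vv; rewrite /refl !idot_lin (idotC v y) vv; ring. Qed.

Lemma refl_K0 v x : idot (K0 n) v = 0 -> idot (K0 n) (refl v x) = idot (K0 n) x.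
Proof. by move=> kv; rewrite /refl idotDr idotZr kv mulr0 addr0. Qed.

Lemma refl_invol v x : idot v v = -2 -> refl v (refl v x) = x.
Proof.
move=> vv; rewrite /refl idotDl idotZl vv -addrA -scalerDl.
have -> : idot x v + (idot x v + idot x v * -2) = 0 by ring.
by rewrite scale0r addr0.
Qed.

Lemma refl_ind v x : K0_root v -> ind (refl v x) = ind x.
Proof. by move=> [vv kv]; rewrite /ind refl_isometry // refl_K0. Qed.

Lemma gen_class_root v : gen_class v -> K0_root v.
Proof.
rewrite /K0_root; case=> [[i [j [ij ->]]] | [i1 [i2 [i3 [v1 [v2 [v3 ->]]]]]]].
  split; last by rewrite !(idotDr, idotNr, idotK0E) subrr.
  by rewrite !(idot_lin, idot_basis) !eqxx eq_sym (negbTE ij) /=; ring.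
split; last by rewrite !(idotDr, idotNr, idotK0E, idotK0H); ring.
have n12 : (i1 == i2) = false by apply/negbTE/eqP => e; move: v1; rewrite e v2.
have n13 : (i1 == i3) = false by apply/negbTE/eqP => e; move: v1; rewrite e v3.
have n23 : (i2 == i3) = false by apply/negbTE/eqP => e; move: v2; rewrite e v3.
rewrite !(idot_lin, idot_basis) !eqxx n12 n13 n23.
by rewrite !(eq_sym i2 i1) !(eq_sym i3 i1) !(eq_sym i3 i2) n12 n13 n23 /=; ring.
Qed.

Lemma DK_isometry phi : DK phi ->
  (forall x y, idot (phi x) (phi y) = idot x y) /\
  (forall x, idot (K0 n) (phi x) = idot (K0 n) x).
Proof.
elim=> [//|v f /gen_class_root [vv kv] _ [f_iso f_K0]].
by split=> [x y | x]; rewrite ?refl_isometry ?refl_K0.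
Qed.

(* Dropping the (nonpositive) contributions of all E_i except three. *)
Lemma ind_le_three x (i1 i2 i3 : 'I_n) : i1 != i2 -> i1 != i3 -> i2 != i3 ->
  ind x <= hcoef x * hcoef x + 3 * hcoef x + (ecoef x i1 - ecoef x i1 * ecoef x i1)
           + (ecoef x i2 - ecoef x i2 * ecoef x i2) + (ecoef x i3 - ecoef x i3 * ecoef x i3).
Proof.
move=> n12 n13 n23; rewrite ind_coord (bigD1 i1) //= (bigD1 i2) 1?eq_sym //=.
rewrite (bigD1 i3) /=; last by rewrite ![i3 == _]eq_sym n13 n23.
have : \sum_(i < n | (i != i1) && (i != i2) && (i != i3)) (ecoef x i - ecoef x i * ecoef x i) <= 0.
  by apply: sumr_le0 => i _; exact: int_sub_sq_le0.
lra.
Qed.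
End Reflections.

Section U5Invariance.
Variable n : nat.

Lemma gen_refl_H_pos (v A : hcls n) : gen_class v ->
  2 <= ind A -> 0 < idot A (clsH n) -> 0 < idot (refl v A) (clsH n).
Proof.
move=> gv indA; rewrite /refl idotDl idotZl (idotH A) => A_pos.
case: gv => [[i [j [_ ->]]] | [i1 [i2 [i3 [v1 [v2 [v3 ->]]]]]]].
  by rewrite idotDl idotNl !idotEH subrr mulr0 addr0.
have n12 : i1 != i2 by apply/eqP => e; move: v1; rewrite e v2.
have n13 : i1 != i3 by apply/eqP => e; move: v1; rewrite e v3.
have n23 : i2 != i3 by apply/eqP => e; move: v2; rewrite e v3.
rewrite !(idotDl, idotDr, idotNl, idotNr, idotHH, idotEH, idotE) idotH.
have := cremona_ineq A_pos (le_trans indA (ind_le_three A n12 n13 n23)).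
lra.
Qed.

Lemma gen_refl_U5 (k : nat) (v A : hcls n) : (0 < k)%N -> gen_class v ->
  U5 k A -> U5 k (refl v A).
Proof.
move=> k_gt0 gv [indA A_pos].
have ind_refl := refl_ind A (gen_class_root gv).
split; first by rewrite ind_refl.
apply: gen_refl_H_pos => //.
by apply: le_trans indA; rewrite lez_nat; lia.
Qed.

(* Part (1): D_{K_0} maps U_5 into U_5, and onto it since generators are
   involutions. *)
Lemma DK_U5 (k : nat) phi (A : hcls n) : (0 < k)%N -> DK phi -> U5 k A -> U5 k (phi A).
Proof. by move=> k_gt0; elim=> [//|v f gv _ IH] /IH; apply: gen_refl_U5. Qed.

Lemma DK_U5_onto (k : nat) phi (B : hcls n) : (0 < k)%N -> DK phi -> U5 k B ->
  exists A, U5 k A /\ phi A = B.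
Proof.
move=> k_gt0 phiD; elim: phiD B => [|v f gv _ IH] B UB; first by exists B.
have [A [UA fA]] := IH _ (gen_refl_U5 k_gt0 gv UB).
have [vv _] := gen_class_root gv.
by exists A; rewrite fA refl_invol.
Qed.
End U5Invariance.

Lemma quad_bound (a M N : int) : a * a + 6 * a * M + 9 * N <= 0 ->
  `|a| <= 6 * `|M| + 9 * `|N|.
Proof. nia. Qed.

Lemma sum_sqr_shift (m : nat) (a : int) (c : 'I_m -> int) :
  \sum_(i < m) ((3 * c i + a) * (3 * c i + a)) =
  9 * \sum_(i < m) (c i * c i) + 6 * a * \sum_(i < m) c i + m%:R * (a * a).
Proof.
have -> : m%:R * (a * a) = \sum_(i < m) (a * a) by rewrite sumr_const card_ord mulr_natl.
rewrite !mulr_sumr -!big_split /=.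
by apply: eq_bigr => i _; ring.
Qed.

(* For n <= 8, the level sets {x.x = N, K_0.x = M} are bounded.  This is where
   K_0^2 = 9 - n > 0 enters: sum_i (3 c_i + a)^2 >= 0 rewrites on the level set
   as (n - 9) a^2 - 6 M a - 9 N >= 0. *)
Section LevelSets.
Variable n : nat.
Hypothesis n_le8 : (n <= 8)%N.
Implicit Type x : hcls n.

Lemma level_hcoef_bound x :
  hcoef x * hcoef x + 6 * hcoef x * idot (K0 n) x + 9 * idot x x <= 0.
Proof.
have sq_ge0 : 0 <= \sum_(i < n) ((3 * ecoef x i + hcoef x) * (3 * ecoef x i + hcoef x)).
  by apply: sumr_ge0 => i _; rewrite -expr2 sqr_ge0.
rewrite sum_sqr_shift in sq_ge0.
have n_le8' : (n%:R : int) <= 8 by rewrite ler_nat.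
have : 0 <= (8 - n%:R) * (hcoef x * hcoef x) by apply: mulr_ge0; rewrite ?subr_ge0 -?expr2 ?sqr_ge0.
rewrite idotK0 /idot; nra.
Qed.

(* |c_i| <= c_i^2 <= sum_j c_j^2 = a^2 - x.x. *)
Lemma level_ecoef_bound x (i : 'I_n) : `|ecoef x i| <= hcoef x * hcoef x - idot x x.
Proof.
have -> : hcoef x * hcoef x - idot x x = \sum_(j < n) ecoef x j * ecoef x j.
  by rewrite /idot; ring.
rewrite (bigD1 i) //=.
have : 0 <= \sum_(j < n | j != i) ecoef x j * ecoef x j.
  by apply: sumr_ge0 => j _; rewrite -expr2 sqr_ge0.
move: (ecoef x i) (\sum_(j < n | j != i) _) => c R R_ge0; nia.
Qed.

Lemma level_coord_bound x (j : 'I_n.+1) :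
  `|x 0 j| <= (6 * `|idot (K0 n) x| + 9 * `|idot x x|) ^+ 2 + `|idot x x|.
Proof.
have := quad_bound (level_hcoef_bound x).
move: (6 * `|idot (K0 n) x| + 9 * `|idot x x|) => D hD.
have D_ge0 : 0 <= D := le_trans (normr_ge0 _) hD.
have hDD : hcoef x * hcoef x <= D ^+ 2.
  by rewrite -expr2 -real_normK ?num_real // ler_sqr ?nnegrE ?normr_ge0.
case: (unliftP ord0 j) => [i ->|->]; last by nia.
have := level_ecoef_bound x i; nia.
Qed.
End LevelSets.

Lemma bounded_rows_finite (m : nat) (B : int) : exists s : seq 'rV[int]_m,
  forall x : 'rV[int]_m, (forall j, `|x 0 j| <= B) -> x \in s.
Proof.
pose b := absz B.
exists [seq \row_j ((f j : nat)%:Z - b%:Z) | f : {ffun 'I_m -> 'I_(b.*2.+1)} <- enum {ffun 'I_m -> 'I_(b.*2.+1)}].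
move=> x x_bd.
have shift_lt (j : 'I_m) : (absz (x 0 j + b%:Z)%R < b.*2.+1)%N by have := x_bd j; lia.
apply/mapP; exists [ffun j => Ordinal (shift_lt j)]; first by rewrite mem_enum.
by apply/rowP => j; rewrite !mxE ffunE /=; have := x_bd j; lia.
Qed.

Theorem lemma4p2 (n k : nat) (hk : (0 < k)%N) :
  (forall phi : hcls n -> hcls n, DK phi ->
     (forall A, U5 k A -> U5 k (phi A)) /\
     (forall B, U5 k B -> exists A, U5 k A /\ phi A = B)) /\
  ((n <= 8)%N -> forall A : hcls n, U5 k A ->
     (exists s : seq (hcls n), forall phi, DK phi -> phi A \in s) /\
     (forall phi, DK phi -> U5 k (phi A))).
Proof.
split=> [phi phiD | n_le8 A UA].
  by split=> [A UA | B UB]; [exact: DK_U5 hk phiD UA | exact: DK_U5_onto hk phiD UB].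
split=> [|phi phiD]; last exact: DK_U5 hk phiD UA.
(* The orbit of A lies in the bounded level set of A.A and K_0.A. *)
have [s s_box] := bounded_rows_finite n.+1
  ((6 * `|idot (K0 n) A| + 9 * `|idot A A|) ^+ 2 + `|idot A A|).
exists s => phi phiD; apply: s_box => j.
have [phi_iso phi_K0] := DK_isometry phiD.
by rewrite -(phi_iso A A) -(phi_K0 A); exact: level_coord_bound.
Qed.
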